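(* Under the standing assumptions in the context, with $h^E$, $h^S$ defined as there, let $$h^Q(r)=\frac{q_w}{r\sqrt{2\eta(r)}},\qquad L(r)=\frac{1}{3\nu(r)\left(\dfrac{2\eta(r)}{3g\,\nu(r)}-h^Q(r)\right)}.$$ Then $L(r)>0$ and $$h^S(r)-h^E(r)\ \ge\ L(r)\,\big(h^S(r)\big)^2\,\big(1-\nu(r)\big)\qquad\text{for all } r\in[r_0,r_1].$$
   Context: Standing assumptions and notation. Let $g>0$, $0<r_0<r_1$, and let $f\in C^1([r_0,r_1])$ with $f'(r)\le 0$ for all $r\in[r_0,r_1]$, $f'(r_0)=0$, and $f(r_0)>f(r_1)$. Set $\nu(r)=1/\sqrt{1+(f'(r))^2}$. Let $h_0>0$, $u_0>0$ with $u_0^2/(g h_0)>1$. Define $q_e=\tfrac12 u_0^2+g\,(f(r_0)+h_0)$, $q_w=r_0h_0u_0$, $\eta(r)=q_e-g f(r)$ (note $\eta(r)>0$ on $[r_0,r_1]$), and $$\mathcal P^S_r(h)=g h^3-\eta(r)h^2+\frac{q_w^2}{2r^2},\qquad \mathcal P^E_r(h)=g\,\nu(r)\, h^3-\eta(r)h^2+\frac{q_w^2}{2r^2}.$$ Let $\nu^S(r)=1$, $\nu^E(r)=\nu(r)$, $h^M_\star(r)=\dfrac{2\eta(r)}{3g\,\nu^M(r)}$ for $M\in\{E,S\}$. For each $r\in[r_0,r_1]$ and $M\in\{E,S\}$, $h^M(r)$ denotes the unique root of $\mathcal P^M_r$ in the interval $(0,h^M_\star(r))$ (this root exists and $h^M$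 is continuous with $h^M(r_0)=h_0$). *)

From Stdlib Require Import Reals Lra.
Open Scope R_scope.

Definition deriv_on (f f' : R -> R) (a b : R) : Prop :=
  forall x, a <= x <= b -> forall eps, 0 < eps -> exists delta, 0 < delta /\
    forall y, a <= y <= b -> Rabs (y - x) < delta ->
      Rabs (f y - f x - f' x * (y - x)) <= eps * Rabs (y - x).

Definition cont_on (h : R -> R) (a b : R) : Prop :=
  forall x, a <= x <= b -> forall eps, 0 < eps -> exists delta, 0 < delta /\
    forall y, a <= y <= b -> Rabs (y - x) < delta -> Rabs (h y - h x) < eps.

Definition C1_on (f f' : R -> R) (a b : R) : Prop :=
  deriv_on f f' a b /\ cont_on f' a b.

Definition nu (f' : R -> R) (r : R) : R := 1 / sqrt (1 + (f' r) ^ 2).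

Definition q_e (g : R) (f : R -> R) (r0 h0 u0 : R) : R :=
  1 / 2 * u0 ^ 2 + g * (f r0 + h0).

Definition q_w (r0 h0 u0 : R) : R := r0 * h0 * u0.

Definition eta (g : R) (f : R -> R) (r0 h0 u0 r : R) : R :=
  q_e g f r0 h0 u0 - g * f r.

(* P_r^M(h) = g nu^M(r) h^3 - eta(r) h^2 + q_w^2/(2 r^2);  nu^S = 1, nu^E = nu *)
Definition polyM (g nuM etar qw r h : R) : R :=
  g * nuM * h ^ 3 - etar * h ^ 2 + qw ^ 2 / (2 * r ^ 2).

Definition hstar (g nuM etar : R) : R := 2 * etar / (3 * g * nuM).

Definition hQ (qw etar r : R) : R := qw / (r * sqrt (2 * etar)).

Definition Lfun (g nur etar qw r : R) : R :=
  1 / (3 * nur * (2 * etar / (3 * g * nur) - hQ qw etar r)).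

From Stdlib Require Import Reals Lra Psatz.
Open Scope R_scope.

(* At a fixed radius r write a = q_w^2/(2 r^2) > 0, so that the
   depths h^S and h^E are roots of the cubics  p_c(h) = c h^3 - eta h^2 + a
   with c = g and c = g nu respectively, both lying left of the local maximum
   (3 c h < 2 eta).  Since h^Q satisfies eta (h^Q)^2 = a, every positive root
   of p_c exceeds h^Q.  Subtracting the two cubic equations gives
     (h^S - h^E) D = g (1 - nu) (h^S)^3,
   D = eta (h^S + h^E) - g nu ((h^S)^2 + h^S h^E + (h^E)^2) > 0, whence
   h^E <= h^S, and the comparison D <= h^S (2 eta - 3 g nu h^Q) turns this into
     (h^S - h^E)(2 eta - 3 g nu h^Q) >= g (h^S)^2 (1 - nu).
   Since L = g / (2 eta - 3 g nu h^Q), this is the claim. *)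

Definition cubic (c eta a h : R) : R := c * h ^ 3 - eta * h ^ 2 + a.

Lemma polyM_cubic (g nuM etar qw r h : R) :
  polyM g nuM etar qw r h = cubic (g * nuM) etar (qw ^ 2 / (2 * r ^ 2)) h.
Proof. reflexivity. Qed.

(* Every positive root of p_c lies above the level hq with eta hq^2 = a,
   because eta h^2 = a + c h^3 > a there. *)
Lemma cubic_root_gt (c eta a hq h : R) :
  0 < c -> 0 < a -> 0 < h -> 0 < hq -> hq ^ 2 * eta = a ->
  cubic c eta a h = 0 -> hq < h.
Proof.
  unfold cubic; intros Hc Ha0 Hh Hq Ha Hroot.
  assert (Hch3 : 0 < c * h ^ 3) by (apply Rmult_lt_0_compat; [lra | apply pow_lt; lra]).
  assert (Hq2 : 0 < hq ^ 2) by (apply pow_lt; lra).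
  assert (Heta : 0 < eta) by nra.
  assert (Hsq : hq ^ 2 < h ^ 2) by nra.
  nra.
Qed.

(* The secant slope of p_c between two points left of its local maximum
   is negative: D = eta (x + y) - c (x^2 + x y + y^2) > 0. *)
Lemma secant_factor_pos (c eta x y : R) :
  0 < c -> 0 < x -> 0 < y -> 3 * c * x < 2 * eta -> 3 * c * y < 2 * eta ->
  0 < eta * (x + y) - c * (x ^ 2 + x * y + y ^ 2).
Proof.
  intros Hc Hx Hy Hxe Hye.
  assert (Hxx : 3 * c * x * x < 2 * eta * x) by (apply Rmult_lt_compat_r; lra).
  assert (Hyy : 3 * c * y * y < 2 * eta * y) by (apply Rmult_lt_compat_r; lra).
  assert (Hsq : 0 <= c * ((x - y) * (x - y))) by (apply Rmult_le_pos; [lra | apply Rle_0_sqr]).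
  assert (E : 2 * (eta * (x + y) - c * (x ^ 2 + x * y + y ^ 2))
              = (2 * eta * x - 3 * c * x * x) + (2 * eta * y - 3 * c * y * y)
                + c * ((x - y) * (x - y))) by ring.
  lra.
Qed.

Lemma cubic_roots_difference (g nu eta a x y : R) :
  cubic g eta a x = 0 -> cubic (g * nu) eta a y = 0 ->
  (x - y) * (eta * (x + y) - g * nu * (x ^ 2 + x * y + y ^ 2))
    = g * (1 - nu) * x ^ 3.
Proof.
  intros Hx Hy.
  assert (E : (x - y) * (eta * (x + y) - g * nu * (x ^ 2 + x * y + y ^ 2))
              - g * (1 - nu) * x ^ 3 = cubic (g * nu) eta a y - cubic g eta a x)
    by (unfold cubic; ring).
  lra.
Qed.

Lemma secant_factor_le (c eta hq x y : R) :
  0 < c -> 0 < hq -> hq < y -> y <= x -> 3 * c * y < 2 * eta ->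
  eta * (x + y) - c * (x ^ 2 + x * y + y ^ 2) <= x * (2 * eta - 3 * c * hq).
Proof.
  intros Hc Hq Hqy Hyx Hye.
  assert (Hcq : c * hq < c * y) by (apply Rmult_lt_compat_l; lra).
  assert (Hcq0 : 0 < c * hq) by (apply Rmult_lt_0_compat; lra).
  assert (P1 : 0 <= c * y * (y - hq)) by (apply Rmult_le_pos; [nra | lra]).
  assert (P2 : 0 <= c * x * (x - hq)) by (apply Rmult_le_pos; [nra | lra]).
  assert (P3 : 0 <= c * x * (y - hq)) by (apply Rmult_le_pos; [nra | lra]).
  assert (P4 : 0 <= (eta - c * hq) * (x - y)) by (apply Rmult_le_pos; lra).
  assert (E : x * (2 * eta - 3 * c * hq) - (eta * (x + y) - c * (x ^ 2 + x * y + y ^ 2))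
              = c * y * (y - hq) + c * x * (x - hq) + c * x * (y - hq)
                + (eta - c * hq) * (x - y)) by ring.
  lra.
Qed.

Lemma depth_gap_bound (g nu eta a hq x y : R) :
  0 < g -> 0 < nu -> nu <= 1 -> 0 < a -> 0 < hq -> hq ^ 2 * eta = a ->
  0 < x -> 3 * g * x < 2 * eta -> cubic g eta a x = 0 ->
  0 < y -> 3 * g * nu * y < 2 * eta -> cubic (g * nu) eta a y = 0 ->
  0 < 2 * eta - 3 * g * nu * hq /\
  g * x ^ 2 * (1 - nu) <= (x - y) * (2 * eta - 3 * g * nu * hq).
Proof.
  intros Hg Hnu Hnu1 Ha0 Hq Ha Hx Hxe Hxr Hy Hye Hyr.
  assert (Hgnu : 0 < g * nu) by (apply Rmult_lt_0_compat; lra).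
  assert (Hqy : hq < y) by exact (cubic_root_gt (g * nu) eta a hq y Hgnu Ha0 Hy Hq Ha Hyr).
  assert (Hgx : 0 <= g * x * (1 - nu))
    by (apply Rmult_le_pos; [apply Rmult_le_pos |]; lra).
  assert (Hxe' : 3 * (g * nu) * x < 2 * eta) by lra.
  assert (Hye' : 3 * (g * nu) * y < 2 * eta) by lra.
  set (D := eta * (x + y) - g * nu * (x ^ 2 + x * y + y ^ 2)).
  assert (HD : 0 < D) by (unfold D;
    exact (secant_factor_pos (g * nu) eta x y Hgnu Hx Hy Hxe' Hye')).
  assert (Hid : (x - y) * D = g * (1 - nu) * x ^ 3)
    by exact (cubic_roots_difference g nu eta a x y Hxr Hyr).
  assert (Hrhs : 0 <= g * (1 - nu) * x ^ 3)
    by (apply Rmult_le_pos; [apply Rmult_le_pos; lra | apply pow_le; lra]).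
  assert (Hyx : y <= x).
  { destruct (Rle_lt_dec y x) as [H | H]; [exact H |].
    assert (0 < (y - x) * D) by (apply Rmult_lt_0_compat; lra). lra. }
  assert (Hqgnu : g * nu * hq < g * nu * y) by (apply Rmult_lt_compat_l; lra).
  split; [lra |].
  set (K := 2 * eta - 3 * g * nu * hq).
  assert (HDK : D <= x * K) by (unfold D, K;
    replace (3 * g * nu * hq) with (3 * (g * nu) * hq) by ring;
    exact (secant_factor_le (g * nu) eta hq x y Hgnu Hq Hqy Hyx Hye')).
  assert (Hmul : (x - y) * D <= (x - y) * (x * K)) by (apply Rmult_le_compat_l; lra).
  apply (Rmult_le_reg_l x); [exact Hx |].
  replace (x * (g * x ^ 2 * (1 - nu))) with (g * (1 - nu) * x ^ 3) by ring.
  replace (x * ((x - y) * K)) with ((x - y) * (x * K)) by ring.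
  lra.
Qed.

Lemma nu_range (f' : R -> R) (r : R) : 0 < nu f' r <= 1.
Proof.
  unfold nu.
  assert (Hs : 1 <= sqrt (1 + f' r ^ 2)).
  { rewrite <- sqrt_1 at 1. apply sqrt_le_1_alt. pose proof (pow2_ge_0 (f' r)). lra. }
  split.
  - apply Rdiv_lt_0_compat; lra.
  - apply (Rmult_le_reg_r (sqrt (1 + f' r ^ 2))); [lra |].
    unfold Rdiv. rewrite Rmult_assoc, Rinv_l by lra. lra.
Qed.

Lemma hQ_pos_sq (qw etar r : R) :
  0 < qw -> 0 < r -> 0 < etar ->
  0 < hQ qw etar r /\ hQ qw etar r ^ 2 * etar = qw ^ 2 / (2 * r ^ 2).
Proof.
  intros Hqw Hr Heta.
  assert (Hs : 0 < sqrt (2 * etar)) by (apply sqrt_lt_R0; lra).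
  unfold hQ; split.
  - apply Rdiv_lt_0_compat; [exact Hqw | apply Rmult_lt_0_compat; lra].
  - unfold Rdiv. rewrite Rpow_mult_distr, pow_inv, Rpow_mult_distr.
    replace (sqrt (2 * etar) ^ 2) with (2 * etar)
      by (simpl; rewrite Rmult_1_r, sqrt_sqrt; lra).
    field; lra.
Qed.

Lemma Lfun_closed_form (g nur etar qw r : R) :
  0 < g -> 0 < nur -> 2 * etar - 3 * g * nur * hQ qw etar r <> 0 ->
  Lfun g nur etar qw r = g / (2 * etar - 3 * g * nur * hQ qw etar r).
Proof.
  intros Hg Hnu HK. unfold Lfun.
  replace (3 * nur * (2 * etar / (3 * g * nur) - hQ qw etar r))
    with ((2 * etar - 3 * g * nur * hQ qw etar r) / g) by (field; lra).
  field; lra.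
Qed.

(* Lying left of h_star^M means lying left of the local maximum of the cubic. *)
Lemma lt_hstar (g nuM etar h : R) :
  0 < g -> 0 < nuM -> h < hstar g nuM etar -> 3 * g * nuM * h < 2 * etar.
Proof.
  unfold hstar; intros Hg Hnu Hh.
  assert (Hc : 0 < 3 * g * nuM) by (apply Rmult_lt_0_compat; lra).
  apply (Rmult_lt_compat_l (3 * g * nuM)) in Hh; [| exact Hc].
  replace (3 * g * nuM * (2 * etar / (3 * g * nuM))) with (2 * etar) in Hh
    by (field; lra).
  exact Hh.
Qed.

Theorem proposition1
  (g r0 r1 h0 u0 : R) (f f' : R -> R) (hS hE : R -> R)
  (Hg : 0 < g) (Hr0 : 0 < r0) (Hr01 : r0 < r1)
  (Hf : C1_on f f' r0 r1)
  (Hf'le : forall r, r0 <= r <= r1 -> f' r <= 0)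
  (Hf'0 : f' r0 = 0)
  (Hf01 : f r0 > f r1)
  (Hh0 : 0 < h0) (Hu0 : 0 < u0)
  (HFr : u0 ^ 2 / (g * h0) > 1)
  (HhS : forall r, r0 <= r <= r1 ->
     0 < hS r < hstar g 1 (eta g f r0 h0 u0 r) /\
     polyM g 1 (eta g f r0 h0 u0 r) (q_w r0 h0 u0) r (hS r) = 0)
  (HhE : forall r, r0 <= r <= r1 ->
     0 < hE r < hstar g (nu f' r) (eta g f r0 h0 u0 r) /\
     polyM g (nu f' r) (eta g f r0 h0 u0 r) (q_w r0 h0 u0) r (hE r) = 0) :
  forall r, r0 <= r <= r1 ->
    0 < Lfun g (nu f' r) (eta g f r0 h0 u0 r) (q_w r0 h0 u0) r /\
    hS r - hE r >=
      Lfun g (nu f' r) (eta g f r0 h0 u0 r) (q_w r0 h0 u0) r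
        * (hS r) ^ 2 * (1 - nu f' r).
Proof.
  intros r Hr.
  destruct (HhS r Hr) as [[HS0 HSmax] HSroot].
  destruct (HhE r Hr) as [[HE0 HEmax] HEroot].
  destruct (nu_range f' r) as [Hnu Hnu1].
  set (n := nu f' r) in *; set (et := eta g f r0 h0 u0 r) in *;
    set (qw := q_w r0 h0 u0) in *.
  rewrite polyM_cubic, Rmult_1_r in HSroot. rewrite polyM_cubic in HEroot.
  apply lt_hstar in HSmax; [| lra | lra]. apply lt_hstar in HEmax; [| lra | lra].
  assert (Hqw : 0 < qw) by (unfold qw, q_w; apply Rmult_lt_0_compat; nra).
  assert (Heta : 0 < et) by nra.
  assert (Ha : 0 < qw ^ 2 / (2 * r ^ 2))
    by (apply Rdiv_lt_0_compat; [apply pow_lt | apply Rmult_lt_0_compat; [| apply pow_lt]]; lra).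
  destruct (hQ_pos_sq qw et r Hqw ltac:(lra) Heta) as [HQ0 HQsq].
  destruct (depth_gap_bound g n et _ _ (hS r) (hE r) Hg Hnu Hnu1 Ha HQ0 HQsq
              HS0 ltac:(lra) HSroot HE0 HEmax HEroot) as [HK Hgap].
  rewrite Lfun_closed_form by lra.
  set (K := 2 * et - 3 * g * n * hQ qw et r) in *.
  split; [apply Rdiv_lt_0_compat; lra |].
  apply Rle_ge, (Rmult_le_reg_r K); [exact HK |].
  replace (g / K * hS r ^ 2 * (1 - n) * K) with (g * hS r ^ 2 * (1 - n)) by (field; lra).
  exact Hgap.
Qed.
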